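(* Let $\mathcal D_1=(L_1,\|\cdot\|_1)$ and $\mathcal D_2=(L_2,\|\cdot\|_2)$ be arithmetic divisors on $\overline{\operatorname{Spec}\mathbf{Z}}$ that are non-degenerate, i.e. whose semi-norms are not identically zero. For $\mathcal D=(L,\|\cdot\|)$ let $S(\mathcal D)=\{\|x\|\mid x\in L\}\subset[0,\infty)$. Then $\mathcal D_1$ and $\mathcal D_2$ are isomorphic if and only if $S(\mathcal D_1)=S(\mathcal D_2)$.
   Context: An arithmetic divisor on $\overline{\operatorname{Spec}\mathbf{Z}}$ is a pair $(L,\|\cdot\|)$ with $L$ torsion-free abelian of rank 1 and $\|\cdot\|$ a semi-norm on $L\otimes_\mathbf{Z}\mathbf{R}$ of the form $\lambda|\phi(\cdot)|$ with $\phi:L\otimes\mathbf{R}\to\mathbf{R}$ an isomorphism and $\lambda\ge0$. An isomorphism $(L_1,\|\cdot\|_1)\to(L_2,\|\cdot\|_2)$ is a group isomorphism $\psi:L_1\to L_2$ with $\|\psi(x)\|_2=\|x\|_1$ for all $x\in L_1$. *)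

From HB Require Import structures.
From mathcomp Require Import all_boot all_order all_algebra.
From mathcomp Require Import reals.
Set Implicit Arguments. Unset Strict Implicit. Unset Printing Implicit Defensive.
Import Order.TTheory GRing.Theory Num.Theory.
Local Open Scope ring_scope.

Definition torsion_free (L : zmodType) : Prop :=
  forall (x : L) (n : nat), x *+ n.+1 = 0 -> x = 0.

Definition rank_one (L : zmodType) : Prop :=
  (exists x : L, x != 0) /\
  forall x y : L, exists m n : int, (m != 0 \/ n != 0) /\ x *~ m = y *~ n.

(* An arithmetic divisor on \bar{Spec Z}: (L, ||.||) with L torsion-free of
   rank 1 and ||.|| = lambda |phi(.)| on L (x) R, phi : L (x) R -> R an
   isomorphism, lambda >= 0.  Since L (x) R is a 1-dimensional real vector
   space and L embeds in it, phi is recorded through its restriction to L,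
   i.e. an injective group homomorphism L -> R. *)
Record arith_divisor (R : realType) := ArithDivisor {
  ad_L : zmodType;
  ad_torsion_free : torsion_free ad_L;
  ad_rank_one : rank_one ad_L;
  ad_phi : {additive ad_L -> R};
  ad_phi_inj : injective ad_phi;
  ad_lambda : R;
  ad_lambda_ge0 : 0 <= ad_lambda }.

Definition ad_norm (R : realType) (D : arith_divisor R) (x : ad_L D) : R :=
  ad_lambda D * `|ad_phi D x|.
Arguments ad_norm {R} D x.

(* Non-degenerate: the semi-norm lambda |phi(.)| on L (x) R is not
   identically zero, i.e. lambda <> 0. *)
Definition ad_nondegenerate (R : realType) (D : arith_divisor R) : Prop :=
  ad_lambda D != 0.

Definition S_values (R : realType) (D : arith_divisor R) : R -> Prop :=
  fun r => exists x : ad_L D, ad_norm D x = r.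

Definition ad_isomorphic (R : realType) (D1 D2 : arith_divisor R) : Prop :=
  exists psi : {additive ad_L D1 -> ad_L D2},
    bijective psi /\ forall x : ad_L D1, ad_norm D2 (psi x) = ad_norm D1 x.

(** The map x |-> lambda phi(x) embeds L into R as a subgroup, and S(D) is the
    set of absolute values of that subgroup; a subgroup of R is symmetric, so
    it is recovered from S(D) as S(D) together with -S(D).  Hence equal value
    sets mean equal images, and two injective homomorphisms with the same
    image differ by a group isomorphism, which preserves the norms. *)
From HB Require Import structures.
From mathcomp Require Import all_boot all_order all_algebra.
From mathcomp Require Import reals.
From mathcomp Require Import boolp.
Set Implicit Arguments. Unset Strict Implicit. Unset Printing Implicit Defensive.
Import Order.TTheory GRing.Theory Num.Theory.
Local Open Scope ring_scope.

Section FactorThrough.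
Variables (A B C : zmodType) (f : {additive A -> C}) (g : {additive B -> C}).
Hypothesis range_fg : forall a, exists b, g b = f a.

Fact range_fg_eqb a : exists b, g b == f a.
Proof. by have [b /eqP] := range_fg a; exists b. Qed.

Definition factor_through (a : A) : B := xchoose (range_fg_eqb a).

Lemma factor_throughK a : g (factor_through a) = f a.
Proof. exact/eqP/(xchooseP (range_fg_eqb a)). Qed.

Lemma factor_through_is_zmod_morphism :
  injective g -> zmod_morphism factor_through.
Proof.
by move=> g_inj x y; apply: g_inj; rewrite raddfB !factor_throughK raddfB.
Qed.

End FactorThrough.

Lemma factor_through_bij (A B C : zmodType)
    (f : {additive A -> C}) (g : {additive B -> C})
    (range_fg : forall a, exists b, g b = f a)
    (range_gf : forall b, exists a, f a = g b) :
  injective f -> injective g -> bijective (factor_through range_fg).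
Proof.
move=> f_inj g_inj; exists (factor_through range_gf) => [a | b].
  by apply: f_inj; rewrite !factor_throughK.
by apply: g_inj; rewrite !factor_throughK.
Qed.

Lemma additive_inj_eq_range_iso (A B C : zmodType)
    (f : {additive A -> C}) (g : {additive B -> C}) :
  injective f -> injective g ->
  (forall a, exists b, g b = f a) -> (forall b, exists a, f a = g b) ->
  exists h : {additive A -> B}, bijective h /\ forall a, g (h a) = f a.
Proof.
move=> f_inj g_inj range_fg range_gf.
pose h : {additive A -> B} := HB.pack (factor_through range_fg)
  (GRing.isZmodMorphism.Build _ _ _
     (factor_through_is_zmod_morphism range_fg g_inj)).
exists h; split; first exact: factor_through_bij.
exact: factor_throughK.
Qed.

Section ArithDivisorEmbedding.
Variables (R : realType) (D : arith_divisor R).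

Definition ad_embed (x : ad_L D) : R := ad_lambda D * ad_phi D x.

Lemma ad_embed_is_zmod_morphism : zmod_morphism ad_embed.
Proof. by move=> x y; rewrite /ad_embed raddfB mulrBr. Qed.

HB.instance Definition _ := GRing.isZmodMorphism.Build (ad_L D) R ad_embed
  ad_embed_is_zmod_morphism.

Lemma ad_normE x : ad_norm D x = `|ad_embed x|.
Proof. by rewrite /ad_norm /ad_embed normrM ger0_norm // ad_lambda_ge0. Qed.

Lemma ad_embed_inj : ad_nondegenerate D -> injective ad_embed.
Proof. by move=> lambda_neq0 x y /(mulfI lambda_neq0) /ad_phi_inj. Qed.

Lemma ad_embed_rangeP r : (exists x, ad_embed x = r) <-> S_values D `|r|.
Proof.
split=> [[x <-] | [x]]; first by exists x; rewrite ad_normE.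
rewrite ad_normE => /eqP; rewrite eqr_norm2 => /orP[/eqP ex_r | /eqP ex_Nr].
  by exists x.
by exists (- x); rewrite raddfN /= ex_Nr opprK.
Qed.

End ArithDivisorEmbedding.
Arguments ad_embed {R} D x.

Lemma ad_isomorphic_S_values (R : realType) (D1 D2 : arith_divisor R) :
  ad_isomorphic D1 D2 -> S_values D1 = S_values D2.
Proof.
move=> [psi [[psi' psiK psi'K] psi_norm]].
apply/funext => r; apply/propext.
split=> [[x <-] | [y <-]]; first by exists (psi x).
by exists (psi' y); rewrite -psi_norm psi'K.
Qed.

Lemma S_values_ad_embed_range (R : realType) (D1 D2 : arith_divisor R) :
  S_values D1 = S_values D2 -> forall x1, exists x2, ad_embed D2 x2 = ad_embed D1 x1.
Proof.
by move=> eqS x1; apply/ad_embed_rangeP; rewrite -eqS; apply/ad_embed_rangeP; exists x1.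
Qed.

Theorem theorem3p11 (R : realType) (D1 D2 : arith_divisor R) :
  ad_nondegenerate D1 -> ad_nondegenerate D2 ->
  (ad_isomorphic D1 D2 <-> S_values D1 = S_values D2).
Proof.
move=> nd1 nd2; split; first exact: ad_isomorphic_S_values.
move=> eqS.
have [psi [psi_bij psi_embed]] := additive_inj_eq_range_iso
  (ad_embed_inj nd1) (ad_embed_inj nd2)
  (S_values_ad_embed_range eqS) (S_values_ad_embed_range (esym eqS)).
by exists psi; split=> // x; rewrite !ad_normE psi_embed.
Qed.
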